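(* Let $\Lambda=K\mathcal{Q}/I$ be a finite-dimensional algebra over a field $K$ as in the context, let $A\geqslant1$ and let $\tilde{\Lambda}_A=K\tilde{\mathcal{Q}}_A/\tilde{I}_A$ be its stretched algebra. Let $m_0$ be the number of vertices and $m_1$ the number of arrows of $\mathcal{Q}$. Then: (1) $\tilde{\Lambda}_A$ is a finite-dimensional algebra; (2) $\tilde{\mathcal{Q}}_A$ has $m_0+m_1(A-1)$ vertices and $m_1A$ arrows; (3) $\{\tilde{g}^2_1,\dots,\tilde{g}^2_m\}$, where $\tilde{g}^2_i=\theta^*(g^2_i)$, is a minimal generating set of uniform elements for $\tilde{I}_A$; (4) if $I$ is generated by length homogeneous elements, then $\tilde{I}_A$ is generated by length homogeneous elements; (5) if $I$ is generated by length homogeneous elements all of length $d$, then $\tilde{I}_A$ is generated by length homogeneous elements all of length $dA$; (6) if $\Lambda$ is a monomial algebra, then $\tilde{\Lambda}_A$ is a monomial algebra.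
   Context: Conventions: $\mathcal{Q}$ is a finite quiver; $\mathfrak{o}(\alpha)$, $\mathfrak{t}(\alpha)$ denote start and end of an arrow; paths are written left to right. An element $x\in K\mathcal{Q}$ is uniform if $x=vx=xv'$ for vertices $v,v'$. $\Lambda=K\mathcal{Q}/I$ is finite-dimensional with $I$ an admissible ideal generated by a minimal set $g^2=\{g^2_1,\dots,g^2_m\}$ of uniform elements. An element of a path algebra is length homogeneous if it is a linear combination of paths all of the same length. $K\mathcal{Q}/I$ is monomial if $I$ is generated by paths. Stretched algebra: for $A\geqslant1$, the quiver $\tilde{\mathcal{Q}}_A$ has all vertices of $\mathcal{Q}$ plus, for each arrow $\alpha$ of $\mathcal{Q}$, new vertices $w_1,\dots,w_{A-1}$; each arrow $\alpha$ is replaced by arrows $\alpha_1,\dots,\alpha_A$ with $\mathfrak{o}(\alpha_1)=\mathfrak{o}(\alpha)$, $\mathfrak{t}(\alpha_j)=\mathfrak{o}(\alpha_{j+1})=w_j$ ($1\le j\le A-1$), $\mathfrak{t}(\alpha_A)=\mathfrak{t}(\alpha)$, and the only arrows incident with $w_j$ are $\alpha_j,\alpha_{j+1}$. $\theta^*:K\mathcal{Q}\to K\tilde{\mathcal{Q}}_A$ is the algebra homomorphism fixing vertices and sending $\alpha\mapsto\alpha_1\cdots\alpha_A$; $\tilde{I}_A$ is the ideal generated by $\theta^*(g^2_1),\dots,\theta^*(g^2_m)$; $\tilde{\Lambda}_A=K\tilde{\mathcal{Q}}_A/\tilde{I}_A$. *)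

From HB Require Import structures.
From mathcomp Require Import all_boot all_algebra.
Set Implicit Arguments. Unset Strict Implicit. Unset Printing Implicit Defensive.
Import GRing.Theory.
Local Open Scope ring_scope.

Record quiver := Quiver {
  qV : finType; qE : finType; qsrc : qE -> qV; qtgt : qE -> qV }.

(** A (candidate) path is a start vertex together with the list of its arrows,
    read left to right.  Trivial paths are (v, [::]). *)
Notation qpath Q := (qV Q * seq (qE Q))%type.

Fixpoint compat (Q : quiver) (v : qV Q) (s : seq (qE Q)) : bool :=
  match s with
  | [::] => true
  | a :: s' => (qsrc a == v) && compat (qtgt a) s'
  end.

Definition valid (Q : quiver) (p : qpath Q) : bool := compat p.1 p.2.

Definition pend (Q : quiver) (v : qV Q) (s : seq (qE Q)) : qV Q :=
  last v (map (@qtgt Q) s).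

Definition plen (Q : quiver) (p : qpath Q) : nat := size p.2.

(** Elements of the path algebra KQ are coefficient functions on paths,
    vanishing outside a finite set of (valid) paths. *)
Definition elt (K : fieldType) (Q : quiver) := qpath Q -> K.

Definition is_elt (K : fieldType) (Q : quiver) (f : elt K Q) : Prop :=
  (forall p, ~~ valid p -> f p = 0) /\
  exists r : seq (qpath Q), forall p, f p != 0 -> p \in r.

Definition pmul (K : fieldType) (Q : quiver) (f g : elt K Q) : elt K Q :=
  fun p => \sum_(i < (size p.2).+1)
             f (p.1, take i p.2) * g (pend p.1 (take i p.2), drop i p.2).

Definition pth (K : fieldType) (Q : quiver) (p : qpath Q) : elt K Q :=
  fun q => (q == p)%:R.

Definition vtx (K : fieldType) (Q : quiver) (v : qV Q) : elt K Q :=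
  pth K (v, [::]).

Definition gen_ideal (K : fieldType) (Q : quiver) (S : elt K Q -> Prop)
  (f : elt K Q) : Prop :=
  exists (n : nat) (c : 'I_n -> K) (l r : 'I_n -> qpath Q) (s : 'I_n -> elt K Q),
    (forall i, [/\ valid (l i), valid (r i) & S (s i)]) /\
    forall q, f q = \sum_(i < n) c i * pmul (pmul (pth K (l i)) (s i)) (pth K (r i)) q.

Definition generates (K : fieldType) (Q : quiver) (S I : elt K Q -> Prop) : Prop :=
  forall f, I f <-> gen_ideal S f.

Definition range_of (K : fieldType) (Q : quiver) (m : nat) (g : 'I_m -> elt K Q)
  : elt K Q -> Prop := fun x => exists i, x = g i.

Definition uniform (K : fieldType) (Q : quiver) (x : elt K Q) : Prop :=
  exists v v' : qV Q,
    (forall q, x q = pmul (vtx K v) x q) /\ (forall q, x q = pmul x (vtx K v') q).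

Definition minimal_gen (K : fieldType) (Q : quiver) (m : nat) (g : 'I_m -> elt K Q)
  : Prop :=
  forall T : {set 'I_m}, T != setT ->
    ~ generates (fun x => exists2 i, i \in T & x = g i) (gen_ideal (range_of g)).

(** J^N, J the arrow ideal: elements supported on paths of length >= N *)
Definition Jpow (K : fieldType) (Q : quiver) (N : nat) (f : elt K Q) : Prop :=
  forall p, f p != 0 -> (N <= plen p)%N.

Definition admissible (K : fieldType) (Q : quiver) (I : elt K Q -> Prop) : Prop :=
  (exists N, (2 <= N)%N /\ forall f, is_elt f -> Jpow N f -> I f) /\
  (forall f, I f -> Jpow 2 f).

Definition findim_quot (K : fieldType) (Q : quiver) (I : elt K Q -> Prop) : Prop :=
  exists (n : nat) (b : 'I_n -> elt K Q), (forall i, is_elt (b i)) /\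
    forall f, is_elt f -> exists c : 'I_n -> K,
      I (fun q => f q - \sum_(i < n) c i * b i q).

Definition lhom_of (K : fieldType) (Q : quiver) (d : nat) (x : elt K Q) : Prop :=
  forall p, x p != 0 -> plen p = d.
Definition lhom (K : fieldType) (Q : quiver) (x : elt K Q) : Prop :=
  exists d, lhom_of d x.

Definition lhom_generated (K : fieldType) (Q : quiver) (I : elt K Q -> Prop) : Prop :=
  exists S : elt K Q -> Prop, (forall x, S x -> is_elt x /\ lhom x) /\ generates S I.
Definition lhom_generated_of (K : fieldType) (Q : quiver) (d : nat)
  (I : elt K Q -> Prop) : Prop :=
  exists S : elt K Q -> Prop, (forall x, S x -> is_elt x /\ lhom_of d x) /\ generates S I.

Definition monomial_ideal (K : fieldType) (Q : quiver) (I : elt K Q -> Prop) : Prop :=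
  exists S : elt K Q -> Prop,
    (forall x, S x -> exists p, valid p /\ x = pth K p) /\ generates S I.

(** new vertices: w_j (1 <= j <= A-1) for arrow a is inr (a, j-1).
    smid a k = the vertex reached after the first k of the arrows a_1..a_A. *)
Definition smid (Q : quiver) (A : nat) (a : qE Q) (k : nat)
  : (qV Q + (qE Q * 'I_A.-1))%type :=
  if k == 0%N then inl (qsrc a)
  else if @insub _ (fun j => j < A.-1)%N _ k.-1 is Some i then inr (a, i)
  else inl (qtgt a).

(** arrow (a, j) with j : 'I_A stands for a_(j+1) *)
Definition stretch (Q : quiver) (A : nat) : quiver :=
  @Quiver (qV Q + (qE Q * 'I_A.-1))%type (qE Q * 'I_A)%type
    (fun e => smid A e.1 e.2) (fun e => smid A e.1 e.2.+1).

Definition theta_path (Q : quiver) (A : nat) (p : qpath Q) : qpath (stretch Q A) :=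
  (inl p.1, flatten [seq [seq (a, j) | j <- enum 'I_A] | a <- p.2]).

(** theta^* : KQ -> K Q~_A, the linear (indeed algebra) extension of theta_path:
    the coefficient of a path q of Q~_A is that of its (unique, since theta_path
    is injective) preimage, if any, and 0 otherwise. *)
Definition thetaS (K : fieldType) (Q : quiver) (A : nat) (f : elt K Q)
  : elt K (stretch Q A) :=
  fun q => match q.1 with
           | inl v => let p := (v, [seq x.1 | x <- q.2 & val x.2 == 0%N]) in
                      if theta_path A p == q then f p else 0
           | inr _ => 0
           end.

From Pilot Require Import Defs.
From mathcomp Require Import all_boot all_algebra.
From Stdlib Require Import Classical FunctionalExtensionality.
From mathcomp Require Import zify.
Set Implicit Arguments. Unset Strict Implicit. Unset Printing Implicit Defensive.
Import GRing.Theory.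
Local Open Scope ring_scope.

(* theta* maps each path p of Q to the path theta(p) of the stretched
   quiver that runs through whole blocks a_1 ... a_A, and it is injective on paths.
   A new vertex w_j has a single outgoing arrow, so a path of the stretched quiver
   of length at least (N+1)A reaches an old vertex within A steps and then runs
   through N whole blocks: it contains theta(p) with p of length N.  Hence J^N <= I
   forces all long paths into the stretched ideal, which gives (1).  Sandwiching
   theta*(x) between two paths commutes with theta*, and, read on theta-paths only,
   a sandwich l' theta*(x) r' is either 0 or a sandwich of x in KQ.  So theta* maps
   the ideal generated by S onto a subset of the ideal generated by theta*(S), and
   pulling back along theta-paths maps the latter back into the former; this
   transports generating sets in both directions and gives (3)-(6). *)

Lemma catsI (T : Type) : right_injective (@cat T).
Proof. by move=> s t1 t2; elim: s => //= x s IH [] /IH. Qed.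

Lemma catIs (T : eqType) : left_injective (@cat T).
Proof.
move=> s t1 t2 E; have Hs : size t1 = size t2.
  by apply/eqP; rewrite -(eqn_add2r (size s)) -!size_cat E.
by move/eqP: E; rewrite eqseq_cat // => /andP[/eqP].
Qed.

Section PathAlgebra.
Variables (K : fieldType) (Q : quiver).
Implicit Types (l r q w : qpath Q) (x y f : elt K Q) (S : elt K Q -> Prop).

Lemma pend_cat (v : qV Q) s1 s2 : pend v (s1 ++ s2) = pend (pend v s1) s2.
Proof. by rewrite /pend map_cat last_cat. Qed.

Lemma compat_cat (v : qV Q) s1 s2 :
  compat v (s1 ++ s2) = compat v s1 && compat (pend v s1) s2.
Proof. by elim: s1 v => //= a s1 IH v; rewrite IH andbA. Qed.

Definition sandwich l x r : elt K Q := pmul (pmul (pth K l) x) (pth K r).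

Lemma pmul_pthl_cat l x u : pmul (pth K l) x (l.1, l.2 ++ u) = x (pend l.1 l.2, u).
Proof.
case: l => v s; rewrite /pmul /=.
have Hi : (size s < (size (s ++ u)).+1)%N by rewrite size_cat ltnS leq_addr.
rewrite (bigD1 (Ordinal Hi)) //= take_size_cat // drop_size_cat // /pth eqxx mul1r.
rewrite big1 ?addr0 // => i /eqP ne; case: eqP => [[E]|]; last by rewrite mul0r.
have /minn_idPl Hi' : (i <= size (s ++ u))%N by rewrite -ltnS.
by case: ne; apply: val_inj; move: (congr1 size E); rewrite size_take_min Hi'.
Qed.

Lemma pmul_pthl_out l x w :
  (forall u, w <> (l.1, l.2 ++ u)) -> pmul (pth K l) x w = 0.
Proof.
case: l w => v s [wv ws] /= H; rewrite /pmul big1 // => i _ /=.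
rewrite /pth; case: eqP => [[E1 E2]|]; last by rewrite mul0r.
by case: (H (drop i ws)); rewrite -E1 -E2 cat_take_drop.
Qed.

Lemma pmul_pthr_cat x r (v : qV Q) u :
  pmul x (pth K r) (v, u ++ r.2) = (pend v u == r.1)%:R * x (v, u).
Proof.
case: r => rv s; rewrite /pmul /=.
have Hi : (size u < (size (u ++ s)).+1)%N by rewrite size_cat ltnS leq_addr.
rewrite (bigD1 (Ordinal Hi)) //= take_size_cat // drop_size_cat // /pth.
rewrite xpair_eqE eqxx andbT mulrC big1 ?addr0 // => i /eqP ne.
case: eqP => [[_ E]|]; last by rewrite mulr0.
have Ei : (size (u ++ s) - i = size s)%N by rewrite -size_drop E.
case: ne; apply: val_inj => /=; have := size_cat u s; have := ltn_ord i; lia.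
Qed.

Lemma pmul_pthr_out x r w : (forall u, w.2 <> u ++ r.2) -> pmul x (pth K r) w = 0.
Proof.
case: r w => rv s [wv ws] /= H; rewrite /pmul big1 // => i _ /=.
rewrite /pth; case: eqP => [[_ E]|]; last by rewrite mulr0.
by case: (H (take i ws)); rewrite -E cat_take_drop.
Qed.

Lemma sandwich_cat l x r u :
  sandwich l x r (l.1, l.2 ++ u ++ r.2) =
  (pend (pend l.1 l.2) u == r.1)%:R * x (pend l.1 l.2, u).
Proof. by rewrite /sandwich catA pmul_pthr_cat pmul_pthl_cat pend_cat. Qed.

Lemma sandwich_out l x r w :
  (forall u, w <> (l.1, l.2 ++ u ++ r.2)) -> sandwich l x r w = 0.
Proof.
case: w => v s H; rewrite /sandwich.
case: (classic (exists u, s = u ++ r.2)) => [[u Es]|N]; last first.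
  by apply: pmul_pthr_out => u /= E; apply: N; exists u.
rewrite Es pmul_pthr_cat pmul_pthl_out ?mulr0 // => u' [Ev Eu].
by apply: (H u'); rewrite Es Ev Eu catA.
Qed.

Lemma sandwich_cases l r w :
  (exists u, w = (l.1, l.2 ++ u ++ r.2)) \/ (forall u, w <> (l.1, l.2 ++ u ++ r.2)).
Proof.
case: (classic (exists u, w = (l.1, l.2 ++ u ++ r.2))) => [|N]; [by left | right].
by move=> u E; apply: N; exists u.
Qed.

Lemma eq_sandwich l x y r w :
  (forall q, x q = y q) -> sandwich l x r w = sandwich l y r w.
Proof.
move=> Exy; case: (sandwich_cases l r w) => [[u ->]|N].
  by rewrite !sandwich_cat Exy.
by rewrite !sandwich_out.
Qed.

Lemma sandwich_sum l r n (c : 'I_n -> K) (F : 'I_n -> elt K Q) w :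
  sandwich l (fun q => \sum_(i < n) c i * F i q) r w =
  \sum_(i < n) c i * sandwich l (F i) r w.
Proof.
case: (sandwich_cases l r w) => [[u ->]|N].
  by rewrite sandwich_cat mulr_sumr; apply: eq_bigr => i _; rewrite sandwich_cat mulrCA.
by rewrite sandwich_out // big1 // => i _; rewrite sandwich_out // mulr0.
Qed.

Lemma sandwichA l l' x r' r w :
  sandwich l (sandwich l' x r') r w =
  if (pend l.1 l.2 == l'.1) && (pend r'.1 r'.2 == r.1)
  then sandwich (l.1, l.2 ++ l'.2) x (r'.1, r'.2 ++ r.2) w else 0.
Proof.
case: (sandwich_cases l r w) => [[u ->]|N]; last first.
  rewrite sandwich_out //; case: ifP => // _; apply/esym/sandwich_out => u' Ew.
  by apply: (N (l'.2 ++ u' ++ r'.2)); rewrite Ew /= -!catA.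
rewrite sandwich_cat; case: (sandwich_cases l' r' (pend l.1 l.2, u)) => [[u' Eu]|N'].
  rewrite Eu sandwich_cat; case: Eu => El ->; rewrite El eqxx /=.
  have -> : l.2 ++ (l'.2 ++ u' ++ r'.2) ++ r.2 = (l.2 ++ l'.2) ++ u' ++ r'.2 ++ r.2.
    by rewrite !catA.
  rewrite sandwich_cat /= !pend_cat El.
  case: (eqVneq (pend (pend l'.1 l'.2) u') r'.1) => [->|_].
    by rewrite mul1r; case: ifP => _; rewrite ?mul1r ?mul0r.
  by rewrite !mul0r mulr0; case: ifP.
rewrite sandwich_out // mulr0; case: ifP => // /andP[/eqP El _].
apply/esym/sandwich_out => u' [E]; apply: (N' u'); rewrite El; congr pair.
by move: E; rewrite -!catA => /catsI; rewrite !catA => /catIs ->; rewrite -!catA.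
Qed.

Lemma sandwich_pth l m r w : pend l.1 l.2 = m.1 -> pend m.1 m.2 = r.1 ->
  sandwich l (pth K m) r w = pth K (l.1, l.2 ++ m.2 ++ r.2) w.
Proof.
case: m => mv ms /= Elm Emr; case: (sandwich_cases l r w) => [[u ->]|N]; last first.
  by rewrite sandwich_out // /pth; case: eqP => // E; case: (N ms).
rewrite sandwich_cat /pth !xpair_eqE Elm eqxx /=.
have [->|ne] := eqVneq u ms; first by rewrite Emr !eqxx /= mulr1.
rewrite mulr0 eqxx /=; case: eqP => // /catsI /catIs E.
by rewrite E eqxx in ne.
Qed.

Lemma sandwich_vtx (v v' : qV Q) x w :
  sandwich (v, [::]) x (v', [::]) w = ((w.1 == v) && (pend w.1 w.2 == v'))%:R * x w.
Proof.
case: w => wv s /=; case: (eqVneq wv v) => [->|ne] /=.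
  by have := sandwich_cat (v, [::]) x (v', [::]) s; rewrite /= cats0.
by rewrite mul0r sandwich_out // => u [E]; rewrite E eqxx in ne.
Qed.

Lemma pmul_vtxl (v : qV Q) x w : pmul (vtx K v) x w = (w.1 == v)%:R * x w.
Proof.
case: w => wv s /=; case: (eqVneq wv v) => [->|ne].
  by have := pmul_pthl_cat (v, [::]) x s; rewrite /= mul1r.
by rewrite mul0r pmul_pthl_out // => u [E]; rewrite E eqxx in ne.
Qed.

Lemma pmul_vtxr (v : qV Q) x w : pmul x (vtx K v) w = (pend w.1 w.2 == v)%:R * x w.
Proof. by case: w => wv s; have := pmul_pthr_cat x (v, [::]) wv s; rewrite /= cats0. Qed.

Lemma gen_idealE S f : gen_ideal S f <->
  exists n (c : 'I_n -> K) (l r : 'I_n -> qpath Q) (s : 'I_n -> elt K Q),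
    (forall i, [/\ valid (l i), valid (r i) & S (s i)]) /\
    forall q, f q = \sum_(i < n) c i * sandwich (l i) (s i) (r i) q.
Proof. by []. Qed.

Lemma gen_ideal_ext S f f' : (forall q, f q = f' q) -> gen_ideal S f -> gen_ideal S f'.
Proof.
move=> Ef [n [c [l [r [s [H E]]]]]]; exists n, c, l, r, s; split => // q.
by rewrite -Ef.
Qed.

Lemma gen_ideal0 S : gen_ideal S (fun _ => 0).
Proof.
pose e (i : 'I_0) : False := Bool.diff_false_true (ltn_ord i).
exists 0%N, (fun _ => 0), (fun i => False_rect _ (e i)), (fun i => False_rect _ (e i)),
  (fun i => False_rect _ (e i)).
by split=> [i|q]; [case: (e i) | rewrite big_ord0].
Qed.

Lemma gen_idealD S f f' :
  gen_ideal S f -> gen_ideal S f' -> gen_ideal S (fun q => f q + f' q).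
Proof.
move=> [n1 [c1 [l1 [r1 [s1 [H1 E1]]]]]] [n2 [c2 [l2 [r2 [s2 [H2 E2]]]]]].
pose join T (a1 : 'I_n1 -> T) (a2 : 'I_n2 -> T) (i : 'I_(n1 + n2)) :=
  match split i with inl j => a1 j | inr j => a2 j end.
exists (n1 + n2)%N, (join _ c1 c2), (join _ l1 l2), (join _ r1 r2), (join _ s1 s2).
split=> [i|q]; first by rewrite /join; case: (split i).
rewrite E1 E2 big_split_ord /join; congr (_ + _); apply: eq_bigr => i _.
  by rewrite -[lshift n2 i]/(unsplit (inl i)) unsplitK.
by rewrite -[rshift n1 i]/(unsplit (inr i)) unsplitK.
Qed.

Lemma gen_idealZ S a f : gen_ideal S f -> gen_ideal S (fun q => a * f q).
Proof.
move=> [n [c [l [r [s [H E]]]]]]; exists n, (fun i => a * c i), l, r, s.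
by split=> // q; rewrite E mulr_sumr; apply: eq_bigr => i _; rewrite mulrA.
Qed.

Lemma gen_ideal_sum S (T : Type) (ts : seq T) (F : T -> elt K Q) :
  (forall t, gen_ideal S (F t)) -> gen_ideal S (fun q => \sum_(t <- ts) F t q).
Proof.
move=> H; elim: ts => [|t ts IH].
  by apply: gen_ideal_ext (gen_ideal0 S) => q; rewrite big_nil.
by apply: gen_ideal_ext (gen_idealD (H t) IH) => q; rewrite big_cons.
Qed.

Lemma gen_ideal_mono S S' f :
  (forall x, S x -> S' x) -> gen_ideal S f -> gen_ideal S' f.
Proof.
move=> SS' [n [c [l [r [s [H E]]]]]]; exists n, c, l, r, s; split=> // i.
by case: (H i) => ? ? /SS'.
Qed.

Lemma gen_ideal_sandwich S l x r :
  valid l -> valid r -> gen_ideal S x -> gen_ideal S (sandwich l x r).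
Proof.
move=> Vl Vr [n [c [ls [rs [s [H E]]]]]].
pose okl i := pend l.1 l.2 == (ls i).1.
pose okr i := pend (rs i).1 (rs i).2 == r.1.
exists n, (fun i => if okl i && okr i then c i else 0),
  (fun i => if okl i then (l.1, l.2 ++ (ls i).2) else ls i),
  (fun i => if okr i then ((rs i).1, (rs i).2 ++ r.2) else rs i), s.
split=> [i|q].
  case: (H i) => V1 V2 Ss; split=> //; rewrite /valid /=.
    by case E1: (okl i) => //; rewrite compat_cat (eqP E1); apply/andP.
  by case E1: (okr i) => //; rewrite compat_cat (eqP E1); apply/andP.
rewrite (@eq_sandwich _ _ (fun q => \sum_(i < n) c i * sandwich (ls i) (s i) (rs i) q)) //.
rewrite sandwich_sum; apply: eq_bigr => i _; rewrite sandwichA -/(okl i) -/(okr i).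
by case: (okl i); case: (okr i); rewrite ?mulr0 ?mul0r.
Qed.

Lemma gen_ideal_trans S S' f :
  (forall x, S x -> gen_ideal S' x) -> gen_ideal S f -> gen_ideal S' f.
Proof.
move=> SS' [n [c [l [r [s [H E]]]]]].
apply: gen_ideal_ext (fun q => esym (E q)) _; apply: gen_ideal_sum => i.
by case: (H i) => Vl Vr /SS' Gs; apply/gen_idealZ/gen_ideal_sandwich.
Qed.

Lemma gen_ideal_gen S x : S x -> gen_ideal S x.
Proof.
move=> Sx.
have G : gen_ideal S (fun q =>
    \sum_(v : qV Q) \sum_(v' : qV Q) sandwich (v, [::]) x (v', [::]) q).
  apply: gen_ideal_sum => v; apply: gen_ideal_sum => v'.
  exists 1%N, (fun _ => 1), (fun _ => (v, [::])), (fun _ => (v', [::])), (fun _ => x).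
  by split=> // q; rewrite big_ord1 mul1r.
apply: gen_ideal_ext G => q.
rewrite (bigD1 q.1) //= [X in _ + X]big1 ?addr0; last first.
  by move=> v /negbTE ne; apply: big1 => v' _; rewrite sandwich_vtx eq_sym ne mul0r.
rewrite (bigD1 (pend q.1 q.2)) //= [X in _ + X]big1 ?addr0; last first.
  by move=> v' /negbTE ne; rewrite sandwich_vtx eqxx eq_sym ne mul0r.
by rewrite sandwich_vtx !eqxx mul1r.
Qed.


Lemma is_elt_pth q : valid q -> is_elt (pth K q).
Proof.
move=> Vq; split=> [w|]; first by rewrite /pth; case: eqP => // ->; rewrite Vq.
by exists [:: q] => w; rewrite /pth inE; case: (w == q); rewrite ?eqxx.
Qed.

Lemma sum_pth (r : seq (qpath Q)) f w : uniq r ->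
  \sum_(q <- r) f q * pth K q w = (w \in r)%:R * f w.
Proof.
move=> Ur; case: (boolP (w \in r)) => wr.
  rewrite (bigD1_seq w) //= /pth eqxx mulr1 mul1r big1 ?addr0 // => q /negbTE nq.
  by rewrite eq_sym nq mulr0.
rewrite mul0r big1_seq // => q /andP[_ qr]; rewrite /pth.
by case: eqP => [E|]; [rewrite E qr in wr | rewrite mulr0].
Qed.

Lemma gen_ideal_Jpow S L f :
  (forall q, valid q -> (L <= plen q)%N -> gen_ideal S (pth K q)) ->
  is_elt f -> Jpow L f -> gen_ideal S f.
Proof.
move=> HL [Vf [r Sf]] Lf.
have Ef w : \sum_(q <- undup r) f q * pth K q w = f w.
  rewrite sum_pth ?undup_uniq // mem_undup.
  case: (boolP (w \in r)) => [_|wr]; rewrite ?mul1r ?mul0r //.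
  by apply/esym/eqP; apply: contraNT wr => /Sf.
apply: gen_ideal_ext Ef (gen_ideal_sum _ _) => q.
have [->|fq] := eqVneq (f q) 0; first by apply: gen_ideal_ext (gen_ideal0 S) => w; rewrite mul0r.
by apply/gen_idealZ/HL; [apply: contraNT fq => /Vf -> | exact: Lf].
Qed.

Definition short_seqs (T : finType) (L : nat) : seq (seq T) :=
  flatten [seq [seq tval t | t <- enum {: k.-tuple T}] | k <- iota 0 L].

Lemma mem_short_seqs (T : finType) L (s : seq T) : (size s < L)%N -> s \in short_seqs T L.
Proof.
move=> sL; apply/flatten_mapP; exists (size s); first by rewrite mem_iota.
by apply/mapP; exists (in_tuple s); rewrite ?mem_enum.
Qed.

Definition short_paths (L : nat) : seq (qpath Q) :=
  undup [seq q <- [seq (v, s) | v <- enum (qV Q), s <- short_seqs (qE Q) L] | valid q].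

Lemma mem_short_paths L q : (q \in short_paths L) = valid q && (plen q < L)%N.
Proof.
rewrite mem_undup mem_filter; case: (valid q) => //=.
apply/idP/idP => [|sq].
  case/allpairsP => -[v s] [_ /flatten_mapP[k]]; rewrite mem_iota => /= kL /mapP[t _ ->] ->.
  by rewrite /plen size_tuple.
by case: q sq => v s sq; apply: allpairs_f; rewrite ?mem_enum ?mem_short_seqs.
Qed.

Lemma findim_quot_of_long_paths S L :
  (forall q, valid q -> (L <= plen q)%N -> gen_ideal S (pth K q)) ->
  findim_quot (gen_ideal S).
Proof.
move=> HL; set P := short_paths L; pose b i := pth K (tnth (in_tuple P) i).
exists (size P), b; split=> [i|f [Vf [r Sf]]].
  by apply: is_elt_pth; move: (mem_tnth i (in_tuple P)); rewrite mem_short_paths => /andP[].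
have Esum w : \sum_(i < size P) f (tnth (in_tuple P) i) * b i w = (w \in P)%:R * f w.
  by rewrite -sum_pth ?(big_tnth _ _ P) //; exact: undup_uniq.
exists (fun i => f (tnth (in_tuple P) i)); apply: gen_ideal_Jpow HL _ _.
  split=> [w /Vf|]; first by rewrite Esum => ->; rewrite mulr0 subr0.
  exists r => w; rewrite Esum.
  by case: (w \in P); rewrite ?mul1r ?subrr ?eqxx // mul0r subr0 => /Sf.
move=> w; rewrite Esum mem_short_paths.
have [_|/Vf ->] := boolP (valid w); last by rewrite mulr0 subrr eqxx.
by case: ltnP; rewrite ?mul1r ?subrr ?eqxx.
Qed.

End PathAlgebra.

Section StretchedQuiver.
Variables (Q : quiver) (A : nat).
Hypothesis A_gt0 : (0 < A)%N.
Local Notation Qs := (stretch Q A).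
Implicit Types (a : qE Q) (s : seq (qE Q)) (p : qpath Q).

Lemma smid_end a : smid A a A = inl (qtgt a).
Proof. by rewrite /smid eqn0Ngt A_gt0 insubF ?ltnn. Qed.

Lemma smid_succ a (j : 'I_A.-1) : smid A a j.+1 = inr (a, j).
Proof. by rewrite /smid /= insubT // => ?; congr (inr (a, _)); apply: val_inj. Qed.

Lemma smid_inner a k : (0 < k < A)%N -> exists j, smid A a k = inr (a, j).
Proof.
case: k => // k /andP[_ kA]; have kA' : (k < A.-1)%N by rewrite -ltnS prednK.
by exists (Ordinal kA'); rewrite -smid_succ.
Qed.

Lemma smid_inr a b k j : smid A b k = inr (a, j) -> b = a /\ k = j.+1.
Proof.
rewrite /smid; case: eqP => // /eqP k0; case: insubP => // j' _ Ej' [-> Ej].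
by split=> //; rewrite -Ej Ej' prednK // lt0n.
Qed.

Definition theta_arrow a : seq (qE Qs) := [seq ((a, j) : qE Qs) | j <- enum 'I_A].
Definition theta_seq s : seq (qE Qs) := flatten [seq theta_arrow a | a <- s].

Lemma theta_pathE p : theta_path A p = (inl p.1, theta_seq p.2).
Proof. by []. Qed.

Lemma size_theta_arrow a : size (theta_arrow a) = A.
Proof. by rewrite size_map size_enum_ord. Qed.

Lemma drop_theta_arrow a k (kA : (k < A)%N) :
  drop k (theta_arrow a) = ((a, Ordinal kA) : qE Qs) :: drop k.+1 (theta_arrow a).
Proof.
rewrite (drop_nth ((a, Ordinal kA) : qE Qs)) ?size_theta_arrow //; congr cons.
rewrite (nth_map (Ordinal kA)) ?size_enum_ord //; congr pair.
by apply: val_inj; rewrite /= nth_enum_ord.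
Qed.

Lemma path_drop_theta_arrow a k : (k <= A)%N ->
  @compat Qs (smid A a k) (drop k (theta_arrow a)) /\
  @pend Qs (smid A a k) (drop k (theta_arrow a)) = inl (qtgt a).
Proof.
move Ed: (A - k)%N => d; elim: d k Ed => [|d IH] k Ed kA.
  have -> : k = A by apply/eqP; rewrite eqn_leq kA -subn_eq0 Ed.
  by rewrite drop_oversize ?size_theta_arrow //= smid_end.
have kA' : (k < A)%N by rewrite -subn_gt0 Ed.
by rewrite (drop_theta_arrow a kA') /= eqxx; apply: IH; lia.
Qed.

Lemma pend_take_theta_arrow a k (v : qV Qs) : (0 < k <= A)%N ->
  pend v (take k (theta_arrow a)) = smid A a k.
Proof.
case: k => // k /= kA.
rewrite (take_nth ((a, Ordinal kA) : qE Qs)) ?size_theta_arrow // /pend map_rcons last_rcons.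
by rewrite (nth_map (Ordinal kA)) ?size_enum_ord //= nth_enum_ord.
Qed.

Lemma compat_theta_arrow_cat a t (v : qV Qs) :
  compat v (theta_arrow a ++ t) = (v == inl (qsrc a)) && @compat Qs (inl (qtgt a)) t.
Proof.
have [C P] := path_drop_theta_arrow a A_gt0.
by rewrite -[theta_arrow a]drop0 (drop_theta_arrow a A_gt0) /= eq_sym compat_cat C P.
Qed.

Lemma pend_theta_arrow a (v : qV Qs) : pend v (theta_arrow a) = inl (qtgt a).
Proof.
by rewrite -[theta_arrow a]take_size size_theta_arrow pend_take_theta_arrow ?smid_end // A_gt0 /=.
Qed.

Lemma theta_seq_cat s1 s2 : theta_seq (s1 ++ s2) = theta_seq s1 ++ theta_seq s2.
Proof. by rewrite /theta_seq map_cat flatten_cat. Qed.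

Lemma size_theta_seq s : size (theta_seq s) = (size s * A)%N.
Proof. by elim: s => //= a s IH; rewrite size_cat size_theta_arrow IH mulSn. Qed.

Lemma compat_theta_seq (v : qV Q) s : @compat Qs (inl v) (theta_seq s) = compat v s.
Proof.
by elim: s v => //= a s IH v; rewrite compat_theta_arrow_cat IH (inj_eq inl_inj) eq_sym.
Qed.

Lemma pend_theta_seq (v : qV Q) s : @pend Qs (inl v) (theta_seq s) = inl (pend v s).
Proof. by elim: s v => //= a s IH v; rewrite pend_cat pend_theta_arrow IH. Qed.

Definition first_copies (t : seq (qE Qs)) : seq (qE Q) :=
  [seq e.1 | e <- t & val e.2 == 0%N].

Lemma first_copies_theta_seq s : first_copies (theta_seq s) = s.
Proof.
elim: s => // a s; rewrite /first_copies [theta_seq _]/= filter_cat map_cat => ->.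
rewrite /theta_arrow filter_map /= (@eq_filter _ _ (pred1 (Ordinal A_gt0))); last first.
  by move=> j /=; apply/eqP/eqP => [E|->//]; apply: val_inj.
by rewrite filter_pred1_uniq ?enum_uniq ?mem_enum.
Qed.

Lemma theta_path_inj : injective (@theta_path Q A).
Proof.
move=> [v1 s1] [v2 s2] [-> /(congr1 first_copies)].
by rewrite !first_copies_theta_seq => ->.
Qed.

Lemma valid_theta_path p : valid (theta_path A p) = valid p.
Proof. exact: compat_theta_seq. Qed.

Lemma pend_theta_path p :
  @pend Qs (theta_path A p).1 (theta_path A p).2 = inl (pend p.1 p.2).
Proof. exact: pend_theta_seq. Qed.

Lemma theta_seq_split s k (v u : qV Q) :
  @pend Qs (inl v) (take k (theta_seq s)) = inl u ->
  exists t, take k (theta_seq s) = theta_seq (take t s) /\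
            drop k (theta_seq s) = theta_seq (drop t s).
Proof.
elim: s k v => [|a s IH] k v; first by move=> _; exists 0%N; case: k.
case: (posnP k) => [-> _|k0]; first by exists 0%N; rewrite take0 drop0.
rewrite [theta_seq _]/= take_cat size_theta_arrow; case: ltnP => [kA|Ak].
  by have [j Ej] := smid_inner a (introT andP (conj k0 kA));
    rewrite pend_take_theta_arrow ?k0 ?(ltnW kA) // Ej.
rewrite pend_cat pend_theta_arrow => /IH[t [E1 E2]]; exists t.+1.
by rewrite /= E1 drop_cat size_theta_arrow ltnNge Ak /= E2.
Qed.

Lemma theta_seq_cat_split s t1 t2 (v u : qV Q) :
  theta_seq s = t1 ++ t2 -> @pend Qs (inl v) t1 = inl u ->
  exists k, t1 = theta_seq (take k s) /\ t2 = theta_seq (drop k s).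
Proof.
move=> Es Pu; have Et1 : take (size t1) (theta_seq s) = t1 by rewrite Es take_size_cat.
have Et2 : drop (size t1) (theta_seq s) = t2 by rewrite Es drop_size_cat.
rewrite -Et1 in Pu; have [k [Ek1 Ek2]] := theta_seq_split Pu.
by exists k; rewrite -Et1 -Et2.
Qed.

Lemma path_from_smid a k (t : seq (qE Qs)) : (0 < k <= A)%N ->
  compat (smid A a k : qV Qs) t -> (A - k <= size t)%N ->
  take (A - k) t = drop k (theta_arrow a) /\
  compat (inl (qtgt a) : qV Qs) (drop (A - k) t).
Proof.
move Ed: (A - k)%N => d; elim: d k t Ed => [|d IH] k t Ed /andP[k0 kA].
  have -> : k = A by apply/eqP; rewrite eqn_leq kA -subn_eq0 Ed.
  by rewrite drop_oversize ?size_theta_arrow // take0 drop0 smid_end.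
have kA' : (k < A)%N by rewrite -subn_gt0 Ed.
case: t => [|e t] //= /andP[/eqP Ee C] Ht.
have [j Ej] := smid_inner a (introT andP (conj k0 kA')).
have [Ea Ek] := smid_inr (etrans Ee Ej).
have Ee' : e = ((a, Ordinal kA') : qE Qs).
  case: e Ea Ek {Ee C} => a' i /= -> Ei; congr pair; apply: val_inj => /=.
  by have [_ ->] := smid_inr Ej.
rewrite Ee' in C *; rewrite (drop_theta_arrow a kA').
by have [-> ->] := IH k.+1 t (etrans (subnS A k) (congr1 predn Ed)) kA' C Ht.
Qed.

Lemma arrow_from_vertex a (j : 'I_A) (u : qV Q) :
  smid A a j = inl u -> j = Ordinal A_gt0 /\ qsrc a = u.
Proof.
have [j0|j0] := posnP j; last by have [i ->] := smid_inner a (introT andP (conj j0 (ltn_ord j))).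
have -> : j = Ordinal A_gt0 by exact: val_inj.
by rewrite /smid /= => -[].
Qed.

Lemma path_from_vertex N (u : qV Q) (t : seq (qE Qs)) :
  compat (inl u : qV Qs) t -> (N * A <= size t)%N ->
  exists s, [/\ size s = N, compat u s & take (N * A) t = theta_seq s].
Proof.
elim: N u t => [|N IH] u t C Ht; first by exists [::]; rewrite mul0n take0.
case: t C Ht => [|[a j] t]; first by move=> _; rewrite leqNgt muln_gt0 A_gt0.
move=> /= /andP[/eqP /arrow_from_vertex[Ej Ea] C] Ht; rewrite {}Ej in C *.
have A1 : (0 < 1 <= A)%N by rewrite A_gt0.
have Ht1 : (A - 1 <= size t)%N by move: Ht; rewrite mulSn; move: (N * A)%N (size t) => NA n; lia.
have [Et C'] := path_from_smid A1 C Ht1.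
have Ht2 : (N * A <= size (drop (A - 1) t))%N.
  by move: Ht; rewrite size_drop mulSn; move: (N * A)%N (size t) => NA n; lia.
have [s [Ss Cs Es]] := IH _ _ C' Ht2.
exists (a :: s); split; [by rewrite /= Ss | by rewrite /= Ea eqxx Cs |].
have take_cons n (e : qE Qs) t' : (0 < n)%N -> take n (e :: t') = e :: take (n - 1) t'.
  by case: n => //= n _; rewrite subn1.
have drop_cons n (e : qE Qs) t' : (0 < n)%N -> drop n (e :: t') = drop (n - 1) t'.
  by case: n => //= n _; rewrite subn1.
by rewrite mulSn takeD take_cons // drop_cons // Et Es -(drop_theta_arrow a A_gt0) drop0.
Qed.

Lemma path_reaches_vertex (v : qV Qs) (t : seq (qE Qs)) : compat v t -> (A <= size t)%N ->
  exists i (u : qV Q),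
    [/\ (i < A)%N, pend v (take i t) = inl u & compat (inl u : qV Qs) (drop i t)].
Proof.
case: v => [u|[a j]] C Ht; first by exists 0%N, u; rewrite take0 drop0.
have jA : (0 < j.+1 <= A)%N by rewrite /= (leq_trans (ltn_ord j) (leq_pred A)).
rewrite -smid_succ in C; have [Et C'] := path_from_smid jA C (leq_trans (leq_subr _ _) Ht).
exists (A - j.+1)%N, (qtgt a); split=> //; first by rewrite subnSK ?leq_subr.
by rewrite Et -smid_succ; case: (path_drop_theta_arrow a (proj2 (andP jA))).
Qed.

Lemma long_path_contains_theta (v : qV Qs) (t : seq (qE Qs)) N :
  compat v t -> (N.+1 * A <= size t)%N ->
  exists t1 (p : qpath Q) t2,
    [/\ t = t1 ++ theta_seq p.2 ++ t2, pend v t1 = inl p.1, valid p & size p.2 = N].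
Proof.
move=> C Ht; have HA := leq_trans (leq_pmull A (ltn0Sn N)) Ht.
have [i [u [iA Pi Ci]]] := path_reaches_vertex C HA.
have Ht' : (N * A <= size (drop i t))%N.
  by move: Ht iA; rewrite size_drop mulSn; move: (N * A)%N (size t) => NA n; lia.
have [s [Ss Cs Es]] := path_from_vertex Ci Ht'.
exists (take i t), (u, s), (drop (N * A) (drop i t)); split=> //.
by rewrite -Es !cat_take_drop.
Qed.

End StretchedQuiver.

Section Theta.
Variables (K : fieldType) (Q : quiver) (A : nat).
Hypothesis A_gt0 : (0 < A)%N.
Local Notation Qs := (stretch Q A).
Local Notation th := (theta_path A).
Local Notation thetaS := (@thetaS K Q A).
Implicit Types (p l r : qpath Q) (q : qpath Qs) (x f : elt K Q) (S : elt K Q -> Prop).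

Definition contract q : qpath Q :=
  (match q.1 with inl v => v | inr (a, _) => qsrc a end, first_copies q.2).

Definition is_theta q := th (contract q) == q.

Lemma contract_theta p : contract (th p) = p.
Proof. by case: p => v s; rewrite /contract /= first_copies_theta_seq. Qed.

Lemma is_thetaP q : reflect (exists p, q = th p) (is_theta q).
Proof.
apply: (iffP eqP) => [<-|[p ->]]; first by exists (contract q).
by rewrite contract_theta.
Qed.

Lemma is_theta_theta p : is_theta (th p).
Proof. by apply/is_thetaP; exists p. Qed.

Lemma thetaSE f q : thetaS f q = if is_theta q then f (contract q) else 0.
Proof. by case: q => [[v|[a j]] t]; rewrite /Defs.thetaS /is_theta /contract //=; case: ifP. Qed.

Lemma thetaS_theta f p : thetaS f (th p) = f p.
Proof. by rewrite thetaSE is_theta_theta contract_theta. Qed.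

Lemma is_theta_sandwich_thetaS (l' r' : qpath Qs) x p :
  sandwich l' (thetaS x) r' (th p) != 0 -> is_theta l' && is_theta r'.
Proof.
case: (sandwich_cases l' r' (th p)) => [[u Ep]|N]; last by rewrite sandwich_out ?eqxx.
rewrite Ep sandwich_cat thetaSE.
case: ifP => [/is_thetaP[w [Ew Eu]]|]; last by rewrite mulr0 eqxx.
have [Er _|_] := eqVneq (pend (pend l'.1 l'.2) u) r'.1; last by rewrite mul0r eqxx.
case: Ep => El Es; rewrite Ew Eu (pend_theta_seq A_gt0) in Er.
have Pl : @pend Qs (inl p.1) l'.2 = inl w.1 by rewrite El.
have [k1 [Ek1 _]] := theta_seq_cat_split A_gt0 Es Pl.
have Pr : @pend Qs (inl p.1) (l'.2 ++ u) = inl (pend w.1 w.2).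
  by rewrite pend_cat Pl Eu (pend_theta_seq A_gt0).
have [k2 [_ Ek2]] := theta_seq_cat_split A_gt0 (etrans Es (catA _ _ _)) Pr.
apply/andP; split; apply/is_thetaP.
  by exists (p.1, take k1 p.2); rewrite theta_pathE -Ek1 El -surjective_pairing.
by exists (pend w.1 w.2, drop k2 p.2); rewrite theta_pathE -Ek2 Er -surjective_pairing.
Qed.

Lemma sandwich_thetaS_support l x r q :
  sandwich (th l) (thetaS x) (th r) q != 0 -> exists u, q = th (l.1, l.2 ++ u ++ r.2).
Proof.
case: (sandwich_cases (th l) (th r) q) => [[u ->]|N]; last by rewrite sandwich_out ?eqxx.
rewrite sandwich_cat thetaSE; case: ifP => [/is_thetaP[w [_ ->]] _|]; last by rewrite mulr0 eqxx.
by exists w.2; rewrite !theta_pathE /= !theta_seq_cat.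
Qed.

Lemma thetaS_sandwich l x r q :
  thetaS (sandwich l x r) q = sandwich (th l) (thetaS x) (th r) q.
Proof.
case: (classic (exists u, q = th (l.1, l.2 ++ u ++ r.2))) => [[u ->]|N].
  have Eq : th (l.1, l.2 ++ u ++ r.2) = ((th l).1, (th l).2 ++ theta_seq A u ++ (th r).2).
    by rewrite !theta_pathE /= !theta_seq_cat.
  rewrite thetaS_theta sandwich_cat [in RHS]Eq sandwich_cat (pend_theta_path A_gt0) /=.
  rewrite (pend_theta_seq A_gt0) (inj_eq inl_inj).
  by rewrite -[(_, theta_seq A u)]/(th (_, u)) thetaS_theta.
have -> : sandwich (th l) (thetaS x) (th r) q = 0.
  by have [//|/sandwich_thetaS_support] := eqVneq (sandwich (th l) (thetaS x) (th r) q) 0.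
rewrite thetaSE; case: ifP => // /is_thetaP[p Eq]; rewrite Eq contract_theta.
by rewrite sandwich_out // => u Ep; apply: N; exists u; rewrite Eq Ep.
Qed.

Lemma sandwich_thetaS_theta (l' r' : qpath Qs) x p :
  sandwich l' (thetaS x) r' (th p) =
  if is_theta l' && is_theta r' then sandwich (contract l') x (contract r') p else 0.
Proof.
case: ifP => [/andP[/is_thetaP[l ->] /is_thetaP[r ->]]|nt].
  by rewrite -thetaS_sandwich thetaS_theta !contract_theta.
by apply/eqP; move: nt; apply: contraFT; apply: is_theta_sandwich_thetaS.
Qed.

Lemma thetaS_pth p : thetaS (pth K p) = pth K (th p).
Proof.
apply: functional_extensionality => q; rewrite thetaSE /pth.
case: ifP => [/is_thetaP[p' ->]|/is_thetaP N].
  by rewrite contract_theta (inj_eq (theta_path_inj A_gt0)).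
by case: eqP => // Eq; case: N; exists p.
Qed.

Lemma is_elt_thetaS x : is_elt x -> is_elt (thetaS x).
Proof.
move=> [Vx [r Sx]]; split=> [q Nq|].
  rewrite thetaSE; case: ifP => // /eqP Eq; apply: Vx.
  by rewrite -(valid_theta_path A_gt0) Eq.
exists (map th r) => q; rewrite thetaSE; case: ifP => [/eqP Eq /Sx Hr|]; last by rewrite eqxx.
by rewrite -Eq map_f.
Qed.

Lemma uniform_thetaS x : uniform x -> uniform (thetaS x).
Proof.
move=> [v [v' [Hl Hr]]]; exists (inl v), (inl v'); split=> q.
  rewrite pmul_vtxl thetaSE; case: ifP => [/is_thetaP[p ->]|]; last by rewrite mulr0.
  by rewrite contract_theta /= (inj_eq inl_inj) -pmul_vtxl -Hl.
rewrite pmul_vtxr thetaSE; case: ifP => [/is_thetaP[p ->]|]; last by rewrite mulr0.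
by rewrite contract_theta (pend_theta_path A_gt0) (inj_eq inl_inj) -pmul_vtxr -Hr.
Qed.

Lemma lhom_of_thetaS d x : lhom_of d x -> lhom_of (d * A) (thetaS x).
Proof.
move=> Hx q; rewrite thetaSE; case: ifP => [/is_thetaP[p ->]|]; last by rewrite eqxx.
by rewrite contract_theta => /Hx; rewrite /plen /= size_theta_seq => ->.
Qed.

Definition image_thetaS S : elt K Qs -> Prop := fun y => exists2 x, S x & y = thetaS x.

Lemma gen_ideal_thetaS S f : gen_ideal S f -> gen_ideal (image_thetaS S) (thetaS f).
Proof.
move/gen_idealE=> [n [c [l [r [s [H E]]]]]]; apply/gen_idealE.
exists n, c, (fun i => th (l i)), (fun i => th (r i)), (fun i => thetaS (s i)).
split=> [i|q].
  by case: (H i) => Vl Vr Ss; rewrite !(valid_theta_path A_gt0); split=> //; exists (s i).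
rewrite thetaSE.
case: ifP => [/is_thetaP[p ->]|nq].
  by rewrite contract_theta E; apply: eq_bigr => i _; rewrite -thetaS_sandwich thetaS_theta.
by rewrite big1 // => i _; rewrite -thetaS_sandwich thetaSE nq mulr0.
Qed.

Definition untheta (F : elt K Qs) : elt K Q := fun p => F (th p).

Lemma untheta_thetaS f : untheta (thetaS f) = f.
Proof. by apply: functional_extensionality => p; apply: thetaS_theta. Qed.

Lemma gen_ideal_untheta S F : gen_ideal (image_thetaS S) F -> gen_ideal S (untheta F).
Proof.
move/gen_idealE=> [n [c [l [r [s [H E]]]]]]; apply/gen_idealE.
pose ok i := is_theta (l i) && is_theta (r i).
(* Off theta-paths the coefficient is 0, so any valid path can stand in. *)
pose pull q : qpath Q := if is_theta q then contract q else ((contract q).1, [::]).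
have Vpull q : valid q -> valid (pull q).
  by rewrite /pull; case: ifP => // /eqP Eq; rewrite -(valid_theta_path A_gt0 (contract q)) Eq.
exists n, (fun i => if ok i then c i else 0), (fun i => pull (l i)), (fun i => pull (r i)),
  (fun i => untheta (s i)).
split=> [i|p].
  by case: (H i) => Vl Vr [x Sx ->]; rewrite untheta_thetaS; split=> //; apply: Vpull.
rewrite /untheta E; apply: eq_bigr => i _; case: (H i) => _ _ [x _ ->].
rewrite sandwich_thetaS_theta -/(untheta _) untheta_thetaS /ok /pull.
by case: (is_theta (l i)); case: (is_theta (r i)); rewrite ?mulr0 ?mul0r.
Qed.

Lemma gen_ideal_long_path S N q :
  (forall p, valid p -> plen p = N -> gen_ideal S (pth K p)) -> valid q ->
  (N.+1 * A <= plen q)%N -> gen_ideal (image_thetaS S) (pth K q).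
Proof.
case: q => v t HN Vq Ht.
have [t1 [p [t2 [/= Et Pt1 Vp Sp]]]] := long_path_contains_theta A_gt0 Vq Ht.
have Gp : gen_ideal (image_thetaS S) (pth K (th p)).
  by rewrite -thetaS_pth; apply/gen_ideal_thetaS/HN.
move: Vq; rewrite /valid /=; subst t.
rewrite !compat_cat Pt1 (compat_theta_seq A_gt0) (pend_theta_seq A_gt0).
case/and3P=> V1 _ V2.
have := gen_ideal_sandwich (V1 : valid (v, t1)) (V2 : valid (inl (pend p.1 p.2) : qV Qs, t2)) Gp.
by apply: gen_ideal_ext => w; rewrite sandwich_pth //= (pend_theta_seq A_gt0).
Qed.

Section Transfer.
Variables (m : nat) (g : 'I_m -> elt K Q).
Local Notation gt := (fun i => thetaS (g i)).

Lemma generates_thetaS S :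
  generates S (gen_ideal (range_of g)) ->
  generates (image_thetaS S) (gen_ideal (range_of gt)).
Proof.
move=> HS f; split; apply: gen_ideal_trans => y.
  by case=> i ->; apply/gen_ideal_thetaS/HS/gen_ideal_gen; exists i.
case=> x /gen_ideal_gen /HS Gx ->.
by apply: gen_ideal_mono (gen_ideal_thetaS Gx) => _ [_ [i ->] ->]; exists i.
Qed.

Lemma minimal_gen_thetaS : minimal_gen g -> minimal_gen gt.
Proof.
move=> min_g T nT HT; apply: (min_g T nT) => f; split; last first.
  by apply: gen_ideal_mono => _ [i _ ->]; exists i.
apply: gen_ideal_trans => y [i ->]; rewrite -(untheta_thetaS (g i)).
have /HT Gi : gen_ideal (range_of gt) (gt i) by apply: gen_ideal_gen; exists i.
apply: gen_ideal_untheta; apply: gen_ideal_mono Gi => z [k kT ->].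
by exists (g k) => //; exists k.
Qed.

Lemma findim_quot_thetaS :
  admissible (gen_ideal (range_of g)) -> findim_quot (gen_ideal (range_of gt)).
Proof.
case=> [[N [_ HN]] _]; apply: (@findim_quot_of_long_paths _ _ _ (N.+1 * A)) => q Vq Lq.
have Hpaths p : valid p -> plen p = N -> gen_ideal (range_of g) (pth K p).
  move=> Vp Lp; apply: HN; first exact: is_elt_pth.
  by move=> w; rewrite /pth; have [->|_] := eqVneq w p; [rewrite Lp | rewrite eqxx].
by apply: gen_ideal_mono (gen_ideal_long_path Hpaths Vq Lq) => _ [_ [i ->] ->]; exists i.
Qed.

Lemma lhom_generated_thetaS :
  lhom_generated (gen_ideal (range_of g)) -> lhom_generated (gen_ideal (range_of gt)).
Proof.
case=> S [HS HG]; exists (image_thetaS S); split; last exact: generates_thetaS.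
move=> _ [x /HS[Ex [d Hd]] ->]; split; first exact: is_elt_thetaS.
by exists (d * A)%N; apply: lhom_of_thetaS.
Qed.

Lemma lhom_generated_of_thetaS d :
  lhom_generated_of d (gen_ideal (range_of g)) ->
  lhom_generated_of (d * A) (gen_ideal (range_of gt)).
Proof.
case=> S [HS HG]; exists (image_thetaS S); split; last exact: generates_thetaS.
by move=> _ [x /HS[Ex Hd] ->]; split; [apply: is_elt_thetaS | apply: lhom_of_thetaS].
Qed.

Lemma monomial_ideal_thetaS :
  monomial_ideal (gen_ideal (range_of g)) -> monomial_ideal (gen_ideal (range_of gt)).
Proof.
case=> S [HS HG]; exists (image_thetaS S); split; last exact: generates_thetaS.
by move=> _ [x /HS[p [Vp ->]] ->]; exists (th p); rewrite thetaS_pth valid_theta_path.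
Qed.

End Transfer.
End Theta.

Theorem proposition1p7 (K : fieldType) (Q : quiver) (m : nat)
  (g : 'I_m -> elt K Q) (A : nat) :
  (1 <= A)%N ->
  (forall i, is_elt (g i)) ->
  (forall i, uniform (g i)) ->
  minimal_gen g ->
  admissible (gen_ideal (range_of g)) ->
  findim_quot (gen_ideal (range_of g)) ->
  let gt : 'I_m -> elt K (stretch Q A) := fun i => @thetaS K Q A (g i) in
  let I := gen_ideal (range_of g) in
  let It := gen_ideal (range_of gt) in
  (* (1) *) findim_quot It /\
  (* (2) *) (#|qV (stretch Q A)| = (#|qV Q| + #|qE Q| * (A - 1))%N
             /\ #|qE (stretch Q A)| = (#|qE Q| * A)%N) /\
  (* (3) *) [/\ forall i, is_elt (gt i), forall i, uniform (gt i),
                    generates (range_of gt) It & minimal_gen gt] /\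
  (* (4) *) (lhom_generated I -> lhom_generated It) /\
  (* (5) *) (forall d, lhom_generated_of d I -> lhom_generated_of (d * A) It) /\
  (* (6) *) (monomial_ideal I -> monomial_ideal It).
Proof.
move=> A_gt0 elt_g unif_g min_g adm_I _ gt I It.
split; first exact: findim_quot_thetaS.
split; first by rewrite card_sum !card_prod !card_ord subn1.
split; first split=> //.
- by move=> i; apply: is_elt_thetaS.
- by move=> i; apply: uniform_thetaS.
- exact: minimal_gen_thetaS.
split; first exact: lhom_generated_thetaS.
split; first exact: lhom_generated_of_thetaS.
exact: monomial_ideal_thetaS.
Qed.
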